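(* Let $(G',\Sigma')$ be a signed graph on vertex set $\{v_1,\dots,v_k\}$, and for each $i\in\{1,\dots,k\}$ let $(G_i,\Sigma_i)$ be a signed graph, the sets $V(G_i)$ pairwise disjoint. Let $(G,\Sigma)$ be the signed graph obtained from $(G',\Sigma')$ by substituting $v_i$ with $(G_i,\Sigma_i)$ for every $i$. For each $i$, let $n_i=|V(G_i)|$, $m_i=\sum_{v_j\in N_{G'}(v_i)}n_j$, and let $\{\lambda_{i,1},\dots,\lambda_{i,n_i}\}$ be the spectrum (multiset of eigenvalues) of $L(G_i,\Sigma_i)$. Let $M$ be the $k\times k$ matrix with $M_{i,i}=\lambda_{i,n_i}+m_i$ and, for $i\neq j$, $M_{i,j}=n_j$ if $v_iv_j\in\Sigma'$, $M_{i,j}=-n_j$ if $v_iv_j\in E(G')\setminus\Sigma'$, and $M_{i,j}=0$ otherwise; let $\{\mu_1,\dots,\mu_k\}$ be the spectrum of $M$. If for every $i$ the all-ones vector $\mathbf{1}_{n_i}$ is a $\lambda_{i,n_i}$-eigenvector of $L(G_i,\Sigma_i)$, then the spectrum of $L(G,\Sigma)$ is the multiset \[\{\mu_i:i\in[k]\}\cup\bigcup_{i=1}^k\{\lambda_{i,j}+m_i:j\in[n_i-1]\}.\]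
   Context: All graphs are finite and simple. A signed graph is a pair $(G,\Sigma)$ with $\Sigma\subseteq E(G)$; edges in $\Sigma$ are odd, others even. The signed Laplacian is $L(G,\Sigma)=D(G)-A(G,\Sigma)$, $D(G)$ the diagonal degree matrix, $A(G,\Sigma)$ having $(i,j)$-entry $1$ for an even edge, $-1$ for an odd edge, $0$ otherwise. For signed graphs $(G,\Sigma)$, $(H,\Gamma)$ with disjoint vertex sets and $v\in V(G)$, substituting $v$ with $(H,\Gamma)$ yields the signed graph obtained from the disjoint union of $(G-v,\Sigma\setminus\delta(v))$ and $(H,\Gamma)$ (where $\delta(v)$ is the set of edges at $v$) by adding all edges $uv'$ with $u\in V(H)$, $v'\in N_G(v)$, where $uv'$ is odd exactly when $vv'$ is odd in $(G,\Sigma)$. Substituting every $v_i$ of $G'$ with $(G_i,\Sigma_i)$ thus gives the signed graph on $\bigcup_iV(G_i)$ containing each $(G_i,\Sigma_i)$, together with, for each edge $v_iv_j$ of $G'$, all edges between $V(G_i)$ and $V(G_j)$, each having the parity of $v_iv_j$ in $(G',\Sigma')$, and no other edges. $[m]=\{1,\dots,m\}$. *)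

From mathcomp Require Import all_boot all_order all_algebra.
Set Implicit Arguments. Unset Strict Implicit. Unset Printing Implicit Defensive.
Import Order.TTheory GRing.Theory Num.Theory.
Local Open Scope ring_scope.

Record sgraph (T : finType) := SGraph {
  sg_adj : rel T;
  sg_odd : rel T;
  sg_adj_sym : forall x y, sg_adj x y = sg_adj y x;
  sg_adj_irr : forall x, sg_adj x x = false;
  sg_odd_sym : forall x y, sg_odd x y = sg_odd y x;
  sg_odd_sub : forall x y, sg_odd x y -> sg_adj x y
}.

Definition laplacian (R : pzRingType) (T : finType) (G : sgraph T)
  : 'M[R]_#|T| :=
  \matrix_(a, b)
    ((if a == b then (#|[set z | sg_adj G (enum_val a) z]|)%:R else 0)
     - (if sg_adj G (enum_val a) (enum_val b)
        then (if sg_odd G (enum_val a) (enum_val b) then -1 else 1)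
        else 0)).

Definition spectrum_is (R : comNzRingType) (m : nat) (A : 'M[R]_m) (s : seq R) :=
  char_poly A = \prod_(x <- s) ('X - x%:P).

(* Substitution: vertex set is the disjoint union {i : 'I_k & 'I_(n i)}
   of the vertex sets of the G_i (vertex v_i of G' is i : 'I_k). *)
Section Subst.
Variables (k : nat) (n : 'I_k -> nat) (G' : sgraph 'I_k)
          (Gs : forall i : 'I_k, sgraph 'I_(n i)).
Definition VT := {i : 'I_k & 'I_(n i)}.

Definition subst_adj (x y : VT) : bool :=
  if tag x == tag y then sg_adj (Gs (tag x)) (tagged x) (tagged_as x y)
  else sg_adj G' (tag x) (tag y).
Definition subst_odd (x y : VT) : bool :=
  if tag x == tag y then sg_odd (Gs (tag x)) (tagged x) (tagged_as x y)
  else sg_odd G' (tag x) (tag y).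

Lemma subst_adj_sym x y : subst_adj x y = subst_adj y x.
Proof.
rewrite /subst_adj eq_sym; case: eqP => [|_]; last exact: sg_adj_sym.
case: x y => [i a] [j b] /= eij; subst j.
by rewrite -[existT _ i a]/(Tagged (fun i : 'I_k => 'I_(n i)) a) -[existT _ i b]/(Tagged (fun i : 'I_k => 'I_(n i)) b) !tagged_asE sg_adj_sym.
Qed.
Lemma subst_adj_irr x : subst_adj x x = false.
Proof. by case: x => i a; rewrite /subst_adj eqxx -[existT _ i a]/(Tagged (fun i : 'I_k => 'I_(n i)) a) tagged_asE sg_adj_irr. Qed.
Lemma subst_odd_sym x y : subst_odd x y = subst_odd y x.
Proof.
rewrite /subst_odd eq_sym; case: eqP => [|_]; last exact: sg_odd_sym.
case: x y => [i a] [j b] /= eij; subst j.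
by rewrite -[existT _ i a]/(Tagged (fun i : 'I_k => 'I_(n i)) a) -[existT _ i b]/(Tagged (fun i : 'I_k => 'I_(n i)) b) !tagged_asE sg_odd_sym.
Qed.
Lemma subst_odd_sub x y : subst_odd x y -> subst_adj x y.
Proof. rewrite /subst_odd /subst_adj; case: ifP => _; exact: sg_odd_sub. Qed.

Definition substitute : sgraph VT :=
  SGraph subst_adj_sym subst_adj_irr subst_odd_sym subst_odd_sub.
End Subst.

From mathcomp Require Import all_boot all_order all_algebra.
From mathcomp Require Import fingroup perm.

(* Pick a representative r i in each block V(G_i) of the substituted graph G.
   Since the all-ones vector is an eigenvector of every L(G_i), the sum of a
   row of L(G) over a block V(G_j) depends only on the block of the row: it
   is the entry M_ij. Hence the change of basis replacing each e_(r i) by the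
   indicator vector of V(G_i) makes L(G) block upper triangular, with
   diagonal blocks M and the "reduced" matrix L(x, y) - L(r (block x), y) on
   the non-representatives. The reduced matrix is block diagonal along the
   blocks, the i-th block being the reduced matrix of L(G_i) shifted by m_i;
   and the same triangularisation applied to L(G_i) alone (one block) shows
   that its reduced matrix has characteristic polynomial
   char L(G_i) / (X - lambda_(i, n_i)). *)
Set Implicit Arguments. Unset Strict Implicit. Unset Printing Implicit Defensive.
Import Order.TTheory GRing.Theory Num.Theory.
Local Open Scope ring_scope.

Lemma inj_surj_bij (T T' : finType) (f : T -> T') :
  injective f -> (forall y, exists x, f x = y) -> bijective f.
Proof.
move=> f_inj f_surj; apply: (inj_card_bij f_inj).
rewrite -(card_codom f_inj); apply/subset_leq_card/subsetP => y _.
by have [x <-] := f_surj y; apply: codom_f.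
Qed.

Section MatrixCharPoly.
Variable R : comNzRingType.

Lemma char_poly_reindex p q (A : 'M[R]_p) (g : 'I_q -> 'I_p) : bijective g ->
  char_poly (\matrix_(i, j) A (g i) (g j)) = char_poly A.
Proof.
move=> g_bij; have eq_qp : q = p by have := bij_eq_card g_bij; rewrite !card_ord.
subst q; pose s : 'S_p := perm (bij_inj g_bij); rewrite /char_poly.
have -> : char_poly_mx (\matrix_(i, j) A (g i) (g j))
          = perm_mx s *m char_poly_mx A *m perm_mx s^-1.
  rewrite -row_permE -col_permE; apply/matrixP => i j.
  by rewrite !mxE !permE (inj_eq (bij_inj g_bij)).
rewrite !det_mulmx !det_perm odd_permV mulrC mulrA -signr_addb addbb.
by rewrite mul1r.
Qed.

Lemma char_poly_conj n (A P Q : 'M[R]_n) : Q *m P = 1%:M ->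
  char_poly (Q *m A *m P) = char_poly A.
Proof.
move=> QP; rewrite /char_poly.
have -> : char_poly_mx (Q *m A *m P)
          = map_mx polyC Q *m char_poly_mx A *m map_mx polyC P.
  rewrite /char_poly_mx mulmxBr mulmxBl -!map_mxM mul_mx_scalar -scalemxAl.
  by rewrite -map_mxM QP map_mx1 scalemx1.
by rewrite !det_mulmx mulrAC -det_mulmx -map_mxM QP map_mx1 det1 mul1r.
Qed.

Lemma char_poly_ublock p q (A : 'M[R]_p) (X : 'M[R]_(p, q)) (D : 'M[R]_q) :
  char_poly (block_mx A X 0 D) = char_poly A * char_poly D.
Proof.
rewrite /char_poly /char_poly_mx map_block_mx map_mx0 scalar_mx_block.
by rewrite opp_block_mx add_block_mx oppr0 addr0 det_ublock.
Qed.

Lemma char_poly_add_scalar n (A : 'M[R]_n) c :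
  char_poly (A + c%:M) = char_poly A \Po ('X - c%:P).
Proof.
rewrite /char_poly -det_map_mx; congr (\det _); apply/matrixP => i j.
rewrite !mxE; case: eqP => _ /=; rewrite ?mulr1n ?mulr0n ?addr0 ?sub0r.
  by rewrite comp_polyB comp_polyX comp_polyC polyCD opprD addrA [RHS]addrAC.
by rewrite -polyCN comp_polyC.
Qed.

End MatrixCharPoly.

Section KernelCharPoly.
Variable R : comNzRingType.
Implicit Types U W : finType.

Definition kmx U (F : U -> U -> R) : 'M[R]_#|U| :=
  \matrix_(a, b) F (enum_val a) (enum_val b).
Definition kchar_poly U (F : U -> U -> R) := char_poly (kmx F).

Lemma eq_kchar_poly U (F G : U -> U -> R) : F =2 G -> kchar_poly F = kchar_poly G.
Proof. by move=> eqFG; congr char_poly; apply/matrixP => a b; rewrite !mxE eqFG. Qed.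

Lemma kchar_poly_reindex U W (h : W -> U) (F : U -> U -> R) : bijective h ->
  kchar_poly (fun a b => F (h a) (h b)) = kchar_poly F.
Proof.
move=> h_bij; have g_bij : bijective (fun i : 'I_#|W| => enum_rank (h (enum_val i))).
  exact: bij_comp (@enum_rank_bij U) (bij_comp h_bij (@enum_val_bij W)).
rewrite /kchar_poly -(char_poly_reindex (kmx F) g_bij).
by congr char_poly; apply/matrixP => i j; rewrite !mxE !enum_rankK.
Qed.

Lemma kchar_poly_mx n (A : 'M[R]_n) : kchar_poly (fun i j : 'I_n => A i j) = char_poly A.
Proof. exact: char_poly_reindex (@enum_val_bij _). Qed.

Lemma kchar_poly_card0 U (F : U -> U -> R) : #|U| = 0%N -> kchar_poly F = 1.
Proof. by move=> U0; rewrite /kchar_poly; move: (kmx F); rewrite U0 => A; exact: det_mx00. Qed.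

Lemma kchar_poly_unit (c : R) : kchar_poly (fun _ _ : unit => c) = 'X - c%:P.
Proof.
have tt_bij : bijective (fun _ : 'I_1 => tt).
  by exists (fun _ => ord0) => [i|[]]; rewrite ?ord1.
rewrite -(kchar_poly_reindex (fun _ _ => c) tt_bij) /=.
rewrite (@eq_kchar_poly _ _ (fun i j => (c%:M : 'M_1) i j)).
  by rewrite kchar_poly_mx /char_poly det_mx11 !mxE.
by move=> i j; rewrite !mxE !ord1.
Qed.

Lemma kchar_poly_shift U (F : U -> U -> R) c :
  kchar_poly (fun x y => F x y + c * (x == y)%:R) = kchar_poly F \Po ('X - c%:P).
Proof.
rewrite /kchar_poly -char_poly_add_scalar; congr char_poly; apply/matrixP => a b.
by rewrite !mxE (inj_eq enum_val_inj) mulr_natr.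
Qed.

Lemma kmx_mul U (F G : U -> U -> R) :
  kmx F *m kmx G = kmx (fun x y => \sum_z F x z * G z y).
Proof.
apply/matrixP => a b; rewrite !mxE [RHS](reindex _ (onW_bij _ (@enum_val_bij U))).
by apply: eq_bigr => c _; rewrite !mxE.
Qed.

Lemma kmx_row_sum U (F : U -> U -> R) (l : R) :
  kmx F *m (const_mx 1 : 'cV_#|U|) = l *: const_mx 1 -> forall x, \sum_z F x z = l.
Proof.
move=> /matrixP eigF x; move: (eigF (enum_rank x) 0); rewrite !mxE mulr1 => <-.
rewrite (reindex _ (onW_bij _ (@enum_val_bij U))).
by apply: eq_bigr => c _; rewrite !mxE enum_rankK mulr1.
Qed.

Lemma kmx_delta U : kmx (fun x y : U => (x == y)%:R) = 1%:M.
Proof. by apply/matrixP => a b; rewrite !mxE (inj_eq enum_val_inj). Qed.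

Lemma kchar_poly_conj U (F P Q : U -> U -> R) :
  (forall x y, \sum_z Q x z * P z y = (x == y)%:R) ->
  kchar_poly (fun x y => \sum_z (\sum_w Q x w * F w z) * P z y) = kchar_poly F.
Proof.
move=> QP; rewrite /kchar_poly -!kmx_mul char_poly_conj // kmx_mul -kmx_delta.
by apply/matrixP => a b; rewrite !mxE QP.
Qed.

End KernelCharPoly.

Section KernelBlocks.
Variable R : comNzRingType.
Implicit Types U : finType.

Lemma kchar_poly_split U (F : U -> U -> R) (S : pred U) :
  (forall a b, ~~ S a -> S b -> F a b = 0) ->
  kchar_poly F = kchar_poly (fun a b : {x | S x} => F (val a) (val b))
               * kchar_poly (fun a b : {x | ~~ S x} => F (val a) (val b)).
Proof.
move=> F_lower0.
pose U1 : finType := {x | S x}; pose U2 : finType := {x | ~~ S x}.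
pose h (t : 'I_#|U1| + 'I_#|U2|) : U :=
  match t with inl i => val (enum_val i) | inr j => val (enum_val j) end.
have h_bij : bijective h.
  apply: inj_card_bij; last first.
    rewrite card_sum !card_ord !card_sig -(cardC [pred x | S x]).
    by apply/eq_leq; congr (_ + _); apply: eq_card.
  move=> [i|j] [i'|j'] /= eq_h.
  - by rewrite (enum_val_inj (val_inj eq_h)).
  - by move: (valP (enum_val j')); rewrite /= -eq_h (valP (enum_val i)).
  - by move: (valP (enum_val j)); rewrite /= eq_h (valP (enum_val i')).
  - by rewrite (enum_val_inj (val_inj eq_h)).
have g_bij : bijective (fun t => enum_rank (h (split t))).
  apply: bij_comp (@enum_rank_bij U) (bij_comp h_bij _).
  by exists unsplit; [exact: splitK | exact: unsplitK].
rewrite /kchar_poly -(char_poly_reindex (kmx F) g_bij).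
set B := \matrix_(i, j) _; rewrite -[B]submxK.
have splitL i : split (lshift #|U2| i) = inl i by apply: (@unsplitK _ _ (inl i)).
have splitR j : split (rshift #|U1| j) = inr j by apply: (@unsplitK _ _ (inr j)).
have -> : dlsubmx B = 0.
  apply/matrixP => i j; rewrite !mxE !enum_rankK splitL splitR.
  exact: F_lower0 (valP (enum_val i)) (valP (enum_val j)).
rewrite char_poly_ublock; congr (_ * _); congr char_poly; apply/matrixP => i j.
  by rewrite !mxE !enum_rankK !splitL.
by rewrite !mxE !enum_rankK !splitR.
Qed.

Lemma kchar_poly_subsub U (P Q : pred U) (F : U -> U -> R) : subpred Q P ->
  kchar_poly (fun a b : {y : {x | P x} | Q (val y)} => F (val (val a)) (val (val b)))
  = kchar_poly (fun a b : {x | Q x} => F (val a) (val b)).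
Proof.
move=> sQP; pose h (y : {y : {x | P x} | Q (val y)}) : {x | Q x} :=
  exist Q (val (val y)) (valP y).
rewrite -(kchar_poly_reindex _ (_ : bijective h)) //; apply: inj_surj_bij.
  by move=> y y' /(congr1 val) eq_y; apply/val_inj/val_inj.
by move=> [x Qx]; exists (exist _ (exist _ x (sQP x Qx)) Qx); apply: val_inj.
Qed.

Lemma kchar_poly_blockdiag (I U : finType) (f : U -> I) (F : U -> U -> R) :
  (forall a b, f a != f b -> F a b = 0) ->
  kchar_poly F = \prod_i kchar_poly (fun a b : {x | f x == i} => F (val a) (val b)).
Proof.
rewrite -big_enum /=; have f_enum x : f x \in enum I by rewrite mem_enum.
move: (enum_uniq I) f_enum; elim: (enum I) U f F => [|i0 s IHs] U f F /= s_uniq f_s F_diag.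
  by rewrite big_nil kchar_poly_card0 //; apply: eq_card0 => x; move: (f_s x).
move: s_uniq => /andP[i0_s s_uniq].
rewrite big_cons (@kchar_poly_split _ F (fun x => f x == i0)); last first.
  by move=> a b /= fa_i0 /eqP fb; apply: F_diag; rewrite fb.
congr (_ * _); rewrite (IHs _ (fun y => f (val y))) //=; last first.
- by move=> a b; apply: F_diag.
- by move=> [x /= fx_i0]; move: (f_s x); rewrite in_cons (negbTE fx_i0).
apply: eq_big_seq => i i_s.
apply: (@kchar_poly_subsub _ (fun x => f x != i0) (fun x => f x == i)) => x /eqP ->.
by apply: contraNneq i0_s => <-.
Qed.

End KernelBlocks.

Definition reduced_kernel (R : zmodType) (U : finType) (rep : U -> U)
    (F : U -> U -> R) : {x | x != rep x} -> {x | x != rep x} -> R :=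
  fun a b => F (val a) (val b) - F (rep (val a)) (val b).
Arguments reduced_kernel {R U} rep F.

Section EquitablePartition.
Variables (R : comNzRingType) (U I : finType) (f : U -> I) (r : I -> U).
Hypothesis rK : cancel r f.

Let rep x := r (f x).
Let is_rep x := x == rep x.

Let is_rep_r i : is_rep (r i).
Proof. by rewrite /is_rep /rep rK. Qed.

(* P is the change of basis replacing e_(r j) by the indicator vector of the
   fibre over j; Q is its inverse. *)
Let P x y : R := if is_rep y then (f x == f y)%:R else (x == y)%:R.
Let Q x y : R := (x == y)%:R - (is_rep y && ~~ is_rep x && (f x == f y))%:R.

Let sum_delta_l x (g : U -> R) : \sum_z (x == z)%:R * g z = g x.
Proof.
rewrite (bigD1 x) //= eqxx mul1r big1 ?addr0 // => z /negbTE zx.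
by rewrite eq_sym zx mul0r.
Qed.

Let mulQ x (g : U -> R) : \sum_w Q x w * g w = g x - (~~ is_rep x)%:R * g (rep x).
Proof.
under eq_bigr do rewrite mulrBl; rewrite sumrB sum_delta_l; congr (_ - _).
rewrite (bigD1 (rep x)) //= big1 ?addr0 => [|z z_rep].
  by rewrite is_rep_r /rep rK eqxx andbT.
rewrite andbAC (_ : is_rep z && (f x == f z) = false) ?mul0r //.
by apply: contraNF z_rep => /andP[/eqP {2}-> /eqP fxz]; rewrite /rep fxz.
Qed.

Let mulQP x y : \sum_z Q x z * P z y = (x == y)%:R.
Proof.
rewrite mulQ /P /rep rK; have [rep_y|nrep_y] := boolP (is_rep y); last first.
  by rewrite (_ : r (f x) == y = false) ?mulr0 ?subr0 //; apply: contraNF nrep_y => /eqP <-.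
have [rep_x|nrep_x] := boolP (is_rep x); rewrite /= ?mul0r ?subr0 ?mul1r ?subrr.
  suff -> : (f x == f y) = (x == y) by [].
  apply/eqP/eqP => [fxy|-> //].
  by rewrite (eqP rep_x) (eqP rep_y) /rep fxy.
by case: eqP => // exy; rewrite exy rep_y in nrep_x.
Qed.

Variables (F : U -> U -> R) (B : I -> I -> R).
Hypothesis F_equitable : forall x j, \sum_(z | f z == j) F x z = B (f x) j.

Let FP w y := \sum_z F w z * P z y.

Let FP_rep w y : is_rep y -> FP w y = B (f w) (f y).
Proof.
move=> rep_y; rewrite /FP /P -F_equitable [RHS]big_mkcond; apply: eq_bigr => z _.
by rewrite rep_y; case: (f z == f y); rewrite ?mulr1 ?mulr0.
Qed.

Let FP_nonrep w y : ~~ is_rep y -> FP w y = F w y.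
Proof.
move=> /negbTE nrep_y; rewrite /FP /P nrep_y (bigD1 y) //= eqxx mulr1 big1 ?addr0 //.
by move=> z /negbTE ->; rewrite mulr0.
Qed.

Lemma kchar_poly_equitable :
  kchar_poly F = kchar_poly B * kchar_poly (reduced_kernel (fun x => r (f x)) F).
Proof.
rewrite -(kchar_poly_conj F mulQP).
have QFP x y : \sum_z (\sum_w Q x w * F w z) * P z y
               = FP x y - (~~ is_rep x)%:R * FP (rep x) y.
  rewrite -(mulQ x (FP^~ y)) /FP; under eq_bigr do rewrite mulr_suml.
  rewrite exchange_big /=; apply: eq_bigr => w _; rewrite mulr_sumr.
  by apply: eq_bigr => z _; rewrite mulrA.
rewrite (eq_kchar_poly QFP) (kchar_poly_split (S := is_rep)); last first.
  by move=> a b nrep_a rep_b; rewrite nrep_a !FP_rep // /rep rK mul1r subrr.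
congr (_ * _).
  pose h i : {x | is_rep x} := exist _ (r i) (is_rep_r i).
  have h_bij : bijective h.
    apply: inj_surj_bij => [i j /(congr1 (f \o val))|[x rep_x]]; first by rewrite /= !rK.
    by exists (f x); apply: val_inj; rewrite /= [RHS](eqP rep_x).
  rewrite -(kchar_poly_reindex _ h_bij); apply: eq_kchar_poly => i j /=.
  by rewrite is_rep_r mul0r subr0 FP_rep ?is_rep_r // !rK.
by apply: eq_kchar_poly => a b; rewrite !FP_nonrep ?(valP a) ?(valP b) ?mul1r.
Qed.

End EquitablePartition.

Lemma kchar_poly_const_row_sum (R : comNzRingType) (U : finType)
    (F : U -> U -> R) (u0 : U) (l : R) :
  (forall x, \sum_z F x z = l) ->
  kchar_poly F = ('X - l%:P) * kchar_poly (reduced_kernel (fun _ => u0) F).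
Proof.
move=> F_rows; rewrite -kchar_poly_unit.
by apply: (@kchar_poly_equitable _ _ _ (fun _ => tt)) => [[]|x []].
Qed.

Lemma kchar_poly_reduced_rcons (R : idomainType) (U : finType)
    (F : U -> U -> R) (u0 : U) (s : seq R) (l : R) :
  (forall x, \sum_z F x z = l) ->
  kchar_poly F = \prod_(x <- rcons s l) ('X - x%:P) ->
  kchar_poly (reduced_kernel (fun _ => u0) F) = \prod_(x <- s) ('X - x%:P).
Proof.
move=> F_rows; rewrite (kchar_poly_const_row_sum u0 F_rows) -cats1 big_cat big_seq1 mulrC.
by apply: mulIf; rewrite polyXsubC_eq0.
Qed.

Definition lap_kernel (R : comNzRingType) (T : finType) (G : sgraph T) (x y : T) : R :=
  (if x == y then #|[set z | sg_adj G x z]|%:R else 0)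
  - (if sg_adj G x y then (if sg_odd G x y then -1 else 1) else 0).

Lemma laplacianE (R : comNzRingType) (T : finType) (G : sgraph T) :
  laplacian R G = kmx (lap_kernel R G).
Proof. by apply/matrixP => a b; rewrite !mxE /lap_kernel (inj_eq enum_val_inj). Qed.

Section Substitution.
Variables (k : nat) (n : 'I_k -> nat) (G' : sgraph 'I_k)
          (Gs : forall i : 'I_k, sgraph 'I_(n i)).
Local Notation G := (substitute G' Gs).
Local Notation V := (VT n).
Local Notation Tag := (Tagged (fun i => 'I_(n i))).

Lemma subst_adj_in i (a b : 'I_(n i)) : sg_adj G (Tag a) (Tag b) = sg_adj (Gs i) a b.
Proof. by rewrite /= /subst_adj /= eqxx tagged_asE. Qed.

Lemma subst_odd_in i (a b : 'I_(n i)) : sg_odd G (Tag a) (Tag b) = sg_odd (Gs i) a b.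
Proof. by rewrite /= /subst_odd /= eqxx tagged_asE. Qed.

Lemma subst_adj_out (x y : V) :
  tag x != tag y -> sg_adj G x y = sg_adj G' (tag x) (tag y).
Proof. by move=> /negbTE xy; rewrite /= /subst_adj xy. Qed.

Lemma subst_odd_out (x y : V) :
  tag x != tag y -> sg_odd G x y = sg_odd G' (tag x) (tag y).
Proof. by move=> /negbTE xy; rewrite /= /subst_odd xy. Qed.

Lemma big_tag (T : Type) (idx : T) (op : Monoid.com_law idx) j (P : pred V) (g : V -> T) :
  \big[op/idx]_(z | (tag z == j) && P z) g z
  = \big[op/idx]_(b : 'I_(n j) | P (Tag b)) g (Tag b).
Proof.
rewrite -(big_pred1_eq op j (fun j => \big[op/idx]_(b : 'I_(n j) | P (Tag b)) g (Tag b))).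
by rewrite sig_big_dep; apply: eq_big => -[i a].
Qed.

Lemma subst_deg i (a : 'I_(n i)) :
  #|[set z | sg_adj G (Tag a) z]|
  = (#|[set z | sg_adj (Gs i) a z]| + \sum_(j | sg_adj G' i j) n j)%N.
Proof.
rewrite -!sum1dep_card (partition_big tag xpredT) //.
rewrite (eq_bigr (fun j => \sum_(b : 'I_(n j) | sg_adj G (Tag a) (Tag b)) 1)%N); last first.
  move=> j _; rewrite -(big_tag addn j (sg_adj G (Tag a)) (fun=> 1%N)).
  by apply: eq_bigl => z; rewrite andbC.
have -> : (\sum_(j | sg_adj G' i j) n j
           = \sum_(j | j != i) if sg_adj G' i j then n j else 0)%N.
  by rewrite big_mkcond (bigD1 i) // sg_adj_irr.
rewrite (bigD1 i) //; congr (_ + _)%N; first by apply: eq_bigl => b; rewrite subst_adj_in.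
apply: eq_bigr => j ji; rewrite (eq_bigl (fun _ => sg_adj G' i j)) => [|b].
  case: (sg_adj G' i j); last by rewrite big_pred0_eq.
  by rewrite sum1_card card_ord.
by rewrite subst_adj_out // eq_sym.
Qed.

Variable R : comNzRingType.
Let m i := (\sum_(j | sg_adj G' i j) n j)%N.

Lemma lap_kernel_subst_in i (a b : 'I_(n i)) :
  lap_kernel R G (Tag a) (Tag b) = lap_kernel R (Gs i) a b + (m i)%:R * (a == b)%:R.
Proof.
rewrite /lap_kernel subst_deg subst_adj_in subst_odd_in eq_Tagged /=.
by case: eqP => _; rewrite ?mulr1 ?mulr0 ?addr0 // natrD addrAC.
Qed.

Lemma lap_kernel_subst_out (x y : V) :
  tag x != tag y -> lap_kernel R G x y = lap_kernel R G' (tag x) (tag y).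
Proof.
move=> xy; rewrite /lap_kernel subst_adj_out // subst_odd_out // (negbTE xy).
by rewrite (_ : x == y = false) //; apply: contraNF xy => /eqP ->.
Qed.

Lemma lap_kernel_subst_fiber_sum (l : 'I_k -> R) :
  (forall i (a : 'I_(n i)), \sum_b lap_kernel R (Gs i) a b = l i) ->
  forall (x : V) j, \sum_(z | tag z == j) lap_kernel R G x z =
    if tag x == j then l (tag x) + (m (tag x))%:R
    else if sg_adj G' (tag x) j then
      (if sg_odd G' (tag x) j then (n j)%:R else - (n j)%:R)
    else 0.
Proof.
move=> row_sum [i a] j /=.
rewrite (eq_bigl (fun z => (tag z == j) && xpredT z)) => [|z]; last by rewrite andbT.
rewrite big_tag /=; have [<-|ij] := eqVneq i j.
  under eq_bigr do rewrite lap_kernel_subst_in.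
  rewrite big_split row_sum (bigD1 a) //= eqxx mulr1 big1 ?addr0 // => b /negbTE ab.
  by rewrite eq_sym ab mulr0.
under eq_bigr do rewrite lap_kernel_subst_out //.
rewrite /= sumr_const card_ord /lap_kernel (negbTE ij) sub0r.
by case: (sg_adj G' i j); case: (sg_odd G' i j); rewrite ?opprK ?oppr0 ?mulNrn ?mul0rn.
Qed.

Variable r0 : forall i, 'I_(n i).
Let rep (x : V) : V := Tag (r0 (tag x)).

Lemma reduced_subst_out (a b : {x : V | x != rep x}) :
  tag (val a) != tag (val b) -> reduced_kernel rep (lap_kernel R G) a b = 0.
Proof. by move=> ab; rewrite /reduced_kernel !lap_kernel_subst_out // subrr. Qed.

Lemma kchar_poly_reduced_subst_fiber i :
  kchar_poly (fun a b : {y : {x : V | x != rep x} | tag (val y) == i} =>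
                reduced_kernel rep (lap_kernel R G) (val a) (val b))
  = kchar_poly (reduced_kernel (fun _ => r0 i) (lap_kernel R (Gs i))) \Po ('X - (m i)%:R%:P).
Proof.
have nrep (a : {b | b != r0 i}) : Tag (val a) != rep (Tag (val a)).
  by rewrite /= eq_Tagged; exact: valP a.
pose h a : {y : {x : V | x != rep x} | tag (val y) == i} :=
  exist _ (exist _ (Tag (val a)) (nrep a)) (eqxx i).
have h_bij : bijective h.
  apply: inj_surj_bij => [a b /(congr1 (val \o val)) /eqP|].
    by rewrite /= eq_Tagged => /eqP /val_inj.
  move=> [[[j a] nrep_a] ji]; have /= ji' := eqP ji; subst j.
  have a_r0 : a != r0 i by have := nrep_a; rewrite /= eq_Tagged.
  by exists (exist _ a a_r0); apply/val_inj/val_inj.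
rewrite -(kchar_poly_reindex _ h_bij) -kchar_poly_shift; apply: eq_kchar_poly => a b /=.
rewrite /reduced_kernel /= !lap_kernel_subst_in [r0 i == _]eq_sym (negbTE (valP b)).
by rewrite mulr0 addr0 addrAC.
Qed.

End Substitution.

Theorem lemma3p6 (R : realFieldType) (k : nat) (n : 'I_k -> nat)
  (G' : sgraph 'I_k) (Gs : forall i : 'I_k, sgraph 'I_(n i))
  (lam : forall i : 'I_k, seq R) (mu : seq R) :
  (forall i, (0 < n i)%N) ->
  (forall i, size (lam i) = n i) ->
  (forall i, spectrum_is (laplacian R (Gs i)) (lam i)) ->
  let m := fun i : 'I_k => (\sum_(j : 'I_k | sg_adj G' i j) n j)%N in
  let M : 'M[R]_k := \matrix_(i, j)
      (if i == j then last 0 (lam i) + (m i)%:R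
       else if sg_adj G' i j then
         (if sg_odd G' i j then (n j)%:R else - (n j)%:R)
       else 0) in
  spectrum_is M mu ->
  (forall i, laplacian R (Gs i) *m (const_mx 1 : 'cV_#|'I_(n i)|)
             = last 0 (lam i) *: const_mx 1) ->
  spectrum_is (laplacian R (substitute G' Gs))
    (mu ++ flatten [seq [seq x + (m i)%:R | x <- take (n i).-1 (lam i)]
                   | i <- enum 'I_k]).
Proof.
move=> n_gt0 size_lam spec_lam m M spec_mu eig_1.
pose r0 i : 'I_(n i) := Ordinal (n_gt0 i).
have row_sum i : forall a, \sum_b lap_kernel R (Gs i) a b = last 0 (lam i).
  by apply: kmx_row_sum; rewrite -laplacianE.
have lam_rcons i : lam i = rcons (take (n i).-1 (lam i)) (last 0 (lam i)).
  rewrite -(nth_last 0) size_lam -take_nth ?size_lam ?ltn_predL //.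
  by rewrite prednK // take_oversize ?size_lam.
rewrite /spectrum_is laplacianE -[char_poly _]/(kchar_poly _).
rewrite (@kchar_poly_equitable _ _ _ tag (fun i => Tagged _ (r0 i)) _ _
  (fun i j => M i j)) //; last first.
  by move=> x j; rewrite (lap_kernel_subst_fiber_sum G' row_sum) mxE.
rewrite kchar_poly_mx spec_mu big_cat; congr (_ * _).
rewrite (kchar_poly_blockdiag (f := fun y => tag (val y))); last exact: reduced_subst_out.
rewrite big_flatten big_map big_enum; apply: eq_bigr => i _.
rewrite kchar_poly_reduced_subst_fiber (kchar_poly_reduced_rcons _ (row_sum i)
  (s := take (n i).-1 (lam i))); last by rewrite /kchar_poly -laplacianE -lam_rcons spec_lam.
rewrite rmorph_prod big_map; apply: eq_bigr => x _.
by rewrite /= comp_polyB comp_polyX comp_polyC polyCD opprD addrA addrAC.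
Qed.
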